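(* Let $H$ be a complex Hadamard matrix of order $n$, and let $T$ be a trade in $H$. Then $|T|\ge n$.
   Context: A complex Hadamard matrix of order $n$ is an $n\times n$ matrix with all entries of modulus $1$ and $HH^{\ast}=nI_n$. A trade in $H$ is a nonempty set $T$ of positions (entries) of $H$ which can be altered to obtain a different complex Hadamard matrix, i.e. there is a complex Hadamard matrix $K$ of order $n$ with $K_{ij}\neq H_{ij}$ for $(i,j)\in T$ and $K_{ij}=H_{ij}$ for $(i,j)\notin T$. The size of $T$ is its number of entries $|T|$. *)

From HB Require Import structures.
From mathcomp Require Import all_boot all_order all_algebra.
From mathcomp Require Import reals complex.
Set Implicit Arguments. Unset Strict Implicit. Unset Printing Implicit Defensive.
Import Order.TTheory GRing.Theory Num.Theory.
Local Open Scope ring_scope.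

Definition adjmx (C : numClosedFieldType) (m n : nat) (A : 'M[C]_(m, n)) : 'M[C]_(n, m) :=
  \matrix_(i < n, j < m) (A j i)^*.

Definition complex_hadamard (R : realType) (n : nat) (H : 'M[R[i]]_n) : Prop :=
  (forall i j, `|H i j| = 1) /\ H *m adjmx H = (n%:R)%:M.

Definition is_trade (R : realType) (n : nat) (H : 'M[R[i]]_n)
    (T : {set 'I_n * 'I_n}) : Prop :=
  T != set0 /\
  exists K : 'M[R[i]]_n, complex_hadamard K /\
    (forall i j, (i, j) \in T -> K i j != H i j) /\
    (forall i j, (i, j) \notin T -> K i j = H i j).

(* Let K be the complex Hadamard matrix obtained by altering T, and let i be a
   row met by T.  Expand the difference x of the i-th rows of K and H in the
   orthogonal basis formed by the rows of H: the coefficient on row l is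
   <K_i, H_l> - <H_i, H_l>, which vanishes whenever row l is untouched by T,
   because then <K_i, H_l> = <K_i, K_l> = <H_i, H_l>.  For unimodular rows,
   expansion, Cauchy-Schwarz and Parseval give the uncertainty principle
   n <= |supp x| * |supp of the coefficients|, hence n <= |T_i| * r, where T_i
   is the part of T in row i and r the number of rows met by T.  Summing over
   these r rows yields n * r <= |T| * r. *)

From mathcomp Require Import all_boot all_order all_algebra.
From mathcomp Require Import reals complex.
Import Order.TTheory GRing.Theory Num.Theory.
Set Implicit Arguments. Unset Strict Implicit. Unset Printing Implicit Defensive.
Local Open Scope ring_scope.

Lemma sqr_sum_le_card_sum_sqr (R : numDomainType) (I : finType) (A : {pred I})
    (b : I -> R) :
  (forall l, b l \is Num.real) ->
  (\sum_(l in A) b l) ^+ 2 <= #|A|%:R * \sum_(l in A) b l ^+ 2.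
Proof.
move=> b_real.
suff : (\sum_(l in A) b l) ^+ 2 *+ 2 <= (#|A|%:R * \sum_(l in A) b l ^+ 2) *+ 2.
  by rewrite lerMn2r.
have -> : (\sum_(l in A) b l) ^+ 2 *+ 2 = \sum_(l in A) \sum_(m in A) b l * b m *+ 2.
  by rewrite expr2 mulr_suml -sumrMnl; apply: eq_bigr => l _; rewrite mulr_sumr sumrMnl.
have -> : (#|A|%:R * \sum_(l in A) b l ^+ 2) *+ 2 =
          \sum_(l in A) \sum_(m in A) (b l ^+ 2 + b m ^+ 2).
  under [RHS]eq_bigr do rewrite big_split /= sumr_const.
  by rewrite big_split /= sumr_const sumrMnl mulr_natl mulr2n.
apply: ler_sum => l _; apply: ler_sum => m _.
exact: real_leif_mean_square_scaled.
Qed.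

Definition dotf (C : numClosedFieldType) (I : finType) (u v : I -> C) : C :=
  \sum_i u i * (v i)^*.

Lemma dotfBl (C : numClosedFieldType) (I : finType) (u v w : I -> C) :
  dotf (fun i => u i - v i) w = dotf u w - dotf v w.
Proof. by rewrite /dotf -sumrB; apply: eq_bigr => i _; rewrite mulrBl. Qed.

Section HadamardOrthogonality.
Variables (C : numClosedFieldType) (n : nat) (H : 'M[C]_n).
Hypothesis HH : H *m adjmx H = n%:R%:M.

Lemma hadamard_row_dot a b : dotf (H a) (H b) = n%:R *+ (a == b).
Proof.
have := congr1 (fun M : 'M[C]_n => M a b) HH; rewrite !mxE /= => <-.
by apply: eq_bigr => j _; rewrite mxE.
Qed.

Lemma adjmx_mul_hadamard : adjmx H *m H = n%:R%:M.
Proof.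
case: n H HH => [|m] H0 HH0; first by rewrite [LHS]flatmx0 [RHS]flatmx0.
have N_neq0 : (m.+1%:R : C) != 0 by rewrite pnatr_eq0.
have : H0 *m ((m.+1%:R)^-1 *: adjmx H0) = 1%:M.
  by rewrite -scalemxAr HH0 scale_scalar_mx mulVf.
move/mulmx1C; rewrite -scalemxAl => /(congr1 (fun M => m.+1%:R *: M)).
by rewrite scalerA divff // scale1r => ->; rewrite scalemx1.
Qed.

Lemma hadamard_col_dot a b : \sum_l (H l a)^* * H l b = n%:R *+ (a == b).
Proof.
have := congr1 (fun M : 'M[C]_n => M a b) adjmx_mul_hadamard; rewrite !mxE /= => <-.
by apply: eq_bigr => j _; rewrite mxE.
Qed.

Lemma hadamard_expansion (x : 'I_n -> C) j :
  n%:R * x j = \sum_l dotf x (H l) * H l j.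
Proof.
under eq_bigr do rewrite mulr_suml.
rewrite exchange_big /=.
under eq_bigr => k _ do
  rewrite (eq_bigr _ (fun l _ => esym (mulrA _ _ _))) -mulr_sumr hadamard_col_dot.
rewrite (bigD1 j) //= eqxx mulrC big1 ?addr0 // => k /negbTE ->.
by rewrite mulr0.
Qed.

Lemma hadamard_parseval (x : 'I_n -> C) :
  \sum_l `|dotf x (H l)| ^+ 2 = n%:R * \sum_j `|x j| ^+ 2.
Proof.
rewrite mulr_sumr; under [RHS]eq_bigr do rewrite normCK mulrA hadamard_expansion.
under [RHS]eq_bigr do rewrite mulr_suml.
rewrite exchange_big /=; apply: eq_bigr => l _.
rewrite normCK; under [RHS]eq_bigr do rewrite -mulrA.
rewrite -mulr_sumr /dotf rmorph_sum; congr (_ * _); apply: eq_bigr => j _.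
by rewrite rmorphM /= conjCK mulrC.
Qed.

Hypothesis H_unimodular : forall i j, `|H i j| = 1.

Theorem hadamard_uncertainty (x : 'I_n -> C) (J L : {set 'I_n}) :
    (forall j, j \notin J -> x j = 0) ->
    (forall l, l \notin L -> dotf x (H l) = 0) ->
    (exists j, x j != 0) ->
  (n <= #|J| * #|L|)%N.
Proof.
move=> x_supp coef_supp [j0 xj0_neq0].
set S := \sum_j `|x j| ^+ 2.
have n_gt0 : (0 < n)%N := leq_ltn_trans (leq0n _) (ltn_ord j0).
have S_gt0 : 0 < S.
  rewrite /S (bigD1 j0) //= ltr_pwDl ?exprn_gt0 ?normr_gt0 //.
  by rewrite sumr_ge0 // => j _; rewrite exprn_ge0.
have coef_norm : \sum_(l in L) `|dotf x (H l)| ^+ 2 = n%:R * S.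
  by rewrite big_rmcond => [|l /coef_supp ->]; rewrite ?hadamard_parseval ?normr0 ?expr0n.
have entry_bound j : (n%:R * `|x j|) ^+ 2 <= #|L|%:R * (n%:R * S).
  rewrite -coef_norm; apply: le_trans _ (sqr_sum_le_card_sum_sqr L (fun l => normr_real _)).
  rewrite lerXn2r ?nnegrE ?mulr_ge0 ?sumr_ge0 //.
  rewrite -normr_nat -normrM hadamard_expansion.
  apply: le_trans (ler_norm_sum _ _ _) _.
  rewrite [leRHS]big_rmcond => [|l /coef_supp ->]; last by rewrite normr0.
  by apply: ler_sum => l _; rewrite normrM H_unimodular mulr1.
have : n%:R * (n%:R * S) <= (#|J| * #|L|)%:R * (n%:R * S).
  rewrite mulrA -expr2 mulr_sumr; under eq_bigr do rewrite -exprMn.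
  rewrite -(@big_rmcond _ _ _ _ _ [in J]) => [|j /x_supp ->]; last first.
    by rewrite normr0 mulr0 expr0n.
  apply: le_trans (ler_sum _ (fun j _ => entry_bound j)) _.
  by rewrite sumr_const -[_ *+ #|J|]mulr_natl !mulrA -!natrM.
by rewrite ler_pM2r ?ler_nat // mulr_gt0 // ltr0n.
Qed.

End HadamardOrthogonality.

Lemma card_sum_sections (I J : finType) (T : {set I * J}) :
  #|T| = \sum_(i in fst @: T) #|[set j | (i, j) \in T]|.
Proof.
rewrite big_rmcond => [|i i_notin]; last first.
  apply/eqP; rewrite cards_eq0; apply/eqP/setP => j; rewrite !inE.
  by apply: contraNF i_notin => ij_in; exact: (imset_f fst ij_in).
rewrite -sum1_card; under [RHS]eq_bigr do rewrite -sum1dep_card.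
by rewrite pair_big_dep; apply: eq_bigl => -[i j].
Qed.

Lemma trade_row_bound (C : numClosedFieldType) (n : nat) (H K : 'M[C]_n)
    (T : {set 'I_n * 'I_n}) i :
    (forall k j, `|H k j| = 1) ->
    H *m adjmx H = n%:R%:M -> K *m adjmx K = n%:R%:M ->
    (forall k j, (k, j) \in T -> K k j != H k j) ->
    (forall k j, (k, j) \notin T -> K k j = H k j) ->
    i \in fst @: T ->
  (n <= #|[set j | (i, j) \in T]| * #|fst @: T|)%N.
Proof.
move=> H_unimodular HH KK T_changed T_kept /imsetP[[i' j0] ij0_in /= ->{i}].
apply: (hadamard_uncertainty HH H_unimodular (x := fun j => K i' j - H i' j)).
- by move=> j; rewrite inE => /T_kept ->; rewrite subrr.
- move=> l l_notin; have row_kept j : K l j = H l j.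
    by apply: T_kept; apply: contra l_notin => lj_in; exact: (imset_f fst lj_in).
  rewrite dotfBl.
  have -> : dotf (K i') (H l) = dotf (K i') (K l).
    by apply: eq_bigr => j _; rewrite row_kept.
  by rewrite (hadamard_row_dot KK) (hadamard_row_dot HH) subrr.
- by exists j0; rewrite subr_eq0 T_changed.
Qed.

Theorem theorem7p3 (R : realType) (n : nat) (H : 'M[R[i]]_n)
    (T : {set 'I_n * 'I_n}) :
  complex_hadamard H -> is_trade H T -> (n <= #|T|)%N.
Proof.
move=> [H_unimodular HH] [T_neq0 [K [[_ KK] [T_changed T_kept]]]].
have rows_gt0 : (0 < #|fst @: T|)%N by rewrite card_gt0 imset_eq0.
rewrite -(leq_pmul2r rows_gt0) card_sum_sections big_distrl /= mulnC -sum_nat_const.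
apply: leq_sum => i i_row.
exact: trade_row_bound H_unimodular HH KK T_changed T_kept i_row.
Qed.
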